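(* Let $G$ be a group, $N$ a normal subgroup, $m\in\mathbb{N}$, and $x_1,\dots,x_m\in N$ with $x_1\cdots x_m\in[G,N]$. Set $a_n=\mathrm{cl}_{G,N}(x_1^n+\cdots+x_m^n)+(m-1)$ for $n\in\mathbb{N}$. Then $(a_n)_n$ is subadditive; consequently the limit $\lim_{n\to\infty}\frac1n\mathrm{cl}_{G,N}(x_1^n+\cdots+x_m^n)$ exists.
   Context: $[G,N]$ is generated by $[g,x]=gxg^{-1}x^{-1}$ ($g\in G,x\in N$); $\mathrm{cl}_{G,N}$ is the word length on $[G,N]$ with respect to these generators. For $y_1,\dots,y_m\in N$ with $y_1\cdots y_m\in[G,N]$, $\mathrm{cl}_{G,N}(y_1+\cdots+y_m)=\inf_{g_1,\dots,g_{m-1}\in G}\mathrm{cl}_{G,N}(y_1g_1y_2g_1^{-1}\cdots g_{m-1}y_mg_{m-1}^{-1})$. *)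

From Stdlib Require Import Reals Lia List ClassicalEpsilon.
Import ListNotations.

Record Group := MkGroup {
  carrier :> Type;
  gmul : carrier -> carrier -> carrier;
  ginv : carrier -> carrier;
  gone : carrier;
  gmul_assoc : forall a b c, gmul a (gmul b c) = gmul (gmul a b) c;
  gmul_1l : forall a, gmul gone a = a;
  gmul_Vl : forall a, gmul (ginv a) a = gone
}.

Arguments gmul {G} : rename.
Arguments ginv {G} : rename.
Arguments gone {G} : rename.

Section Defs.
Variable G : Group.

Definition normal_subgroup (N : G -> Prop) : Prop :=
  N gone /\ (forall a b, N a -> N b -> N (gmul a b)) /\
  (forall a, N a -> N (ginv a)) /\
  (forall g a, N a -> N (gmul (gmul g a) (ginv g))).

Definition gprod (l : list G) : G := fold_right gmul gone l.

Fixpoint gpow (x : G) (n : nat) : G :=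
  match n with O => gone | S k => gmul x (gpow x k) end.

Definition comm (g x : G) : G := gmul (gmul (gmul g x) (ginv g)) (ginv x).

Variable N : G -> Prop.

Definition mixed_comm (y : G) : Prop := exists g x, N x /\ y = comm g x.

Definition cl_le (y : G) (k : nat) : Prop :=
  exists l : list G, length l = k /\
    Forall (fun z => mixed_comm z \/ mixed_comm (ginv z)) l /\ gprod l = y.

Definition in_GN (y : G) : Prop := exists k, cl_le y k.

(* least element of a set of naturals (junk value 0-ish if empty) *)
Definition nat_inf (P : nat -> Prop) : nat :=
  epsilon (inhabits 0) (fun n => P n /\ forall k, P k -> n <= k).

Definition cl (y : G) : nat := nat_inf (cl_le y).

Fixpoint twist (ys gs : list G) : G :=
  match ys, gs with
  | y :: ys', g :: gs' => gmul (gmul (gmul g y) (ginv g)) (twist ys' gs')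
  | _, _ => gone
  end.

Definition twisted_prod (ys gs : list G) : G :=
  match ys with
  | [] => gone
  | y :: ys' => gmul y (twist ys' gs)
  end.

(* cl_{G,N}(y_1 + ... + y_m) = inf over g_1..g_{m-1} *)
Definition cl_sum (ys : list G) : nat :=
  nat_inf (fun k => exists gs : list G,
             length gs = pred (length ys) /\ k = cl (twisted_prod ys gs)).

End Defs.

(* Write y_1 + ... + y_m as a twisted product y_1 (g_1 y_2 g_1^-1) ... (g_{m-1} y_m g_{m-1}^-1).
   Multiplying an optimal twisted product for the n-th powers by one for the k-th powers
   gives a word of length a_n + a_k - 2(m-1) representing
   x_1^n (c_2 x_2^n c_2^-1) ... x_1^k (d_2 x_2^k d_2^-1) ...; moving each factor of the
   second block next to its partner of the first block only conjugates the factors in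
   between (so x_1^k joins x_1^n for free), and re-conjugating it by the partner's
   conjugator costs one mixed commutator, since
   g' y g'^-1 = [g' g^-1, g y g^-1] (g y g^-1) with g y g^-1 in N.  These m-1
   corrections give a_{n+k} <= a_n + a_k, and Fekete's lemma yields the limit. *)
From Stdlib Require Import Reals List Lia Lra Classical ClassicalEpsilon.
Import ListNotations.

Section GroupFacts.
Variable G : Group.

Lemma mulgV (a : G) : gmul a (ginv a) = gone.
Proof.
  assert (Hidem : gmul (gmul a (ginv a)) (gmul a (ginv a)) = gmul a (ginv a)).
  { rewrite <- gmul_assoc, (gmul_assoc G (ginv a)), gmul_Vl, gmul_1l. reflexivity. }
  rewrite <- (gmul_1l G (gmul a (ginv a))), <- (gmul_Vl G (gmul a (ginv a))) at 1.
  rewrite <- gmul_assoc, Hidem. apply gmul_Vl.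
Qed.

Lemma mulg1 (a : G) : gmul a gone = a.
Proof. rewrite <- (gmul_Vl G a), gmul_assoc, mulgV, gmul_1l. reflexivity. Qed.

Lemma mulgK (x a : G) : gmul (gmul x a) (ginv a) = x.
Proof. rewrite <- gmul_assoc, mulgV, mulg1. reflexivity. Qed.

Lemma mulgVK (x a : G) : gmul (gmul x (ginv a)) a = x.
Proof. rewrite <- gmul_assoc, gmul_Vl, mulg1. reflexivity. Qed.

Lemma invg_unique (a b : G) : gmul a b = gone -> ginv a = b.
Proof.
  intro Hab. rewrite <- (mulg1 (ginv a)), <- Hab, gmul_assoc, gmul_Vl, gmul_1l.
  reflexivity.
Qed.

Lemma invgK (a : G) : ginv (ginv a) = a.
Proof. apply invg_unique, gmul_Vl. Qed.

Lemma invgM (a b : G) : ginv (gmul a b) = gmul (ginv b) (ginv a).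
Proof. apply invg_unique. rewrite !gmul_assoc, mulgK, mulgV. reflexivity. Qed.

Lemma invg1 : ginv (@gone G) = gone.
Proof. apply invg_unique, gmul_1l. Qed.

End GroupFacts.

Ltac gsimpl :=
  repeat progress rewrite ?invgM, ?invgK, ?invg1, ?gmul_1l, ?mulg1, ?gmul_Vl, ?mulgV,
    ?gmul_assoc, ?mulgK, ?mulgVK.

Section Words.
Variable G : Group.

Lemma gprod_app (l1 l2 : list G) :
  gprod G (l1 ++ l2) = gmul (gprod G l1) (gprod G l2).
Proof.
  induction l1 as [|a l IH]; simpl; [rewrite gmul_1l; reflexivity|].
  unfold gprod in *; simpl. rewrite IH, gmul_assoc. reflexivity.
Qed.

Lemma gpow_add (x : G) n k : gpow G x (n + k) = gmul (gpow G x n) (gpow G x k).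
Proof.
  induction n as [|n IH]; simpl; [rewrite gmul_1l; reflexivity|].
  rewrite IH, gmul_assoc. reflexivity.
Qed.

Lemma gpow1 (x : G) : gpow G x 1 = x.
Proof. apply mulg1. Qed.

Lemma twist_conj (c : G) ys gs :
  gmul (gmul c (twist G ys gs)) (ginv c) = twist G ys (map (gmul c) gs).
Proof.
  revert gs; induction ys as [|y ys IH]; intros [|g gs]; simpl; try (gsimpl; reflexivity).
  rewrite <- IH. gsimpl. reflexivity.
Qed.

Lemma twist_map_one (l : list G) gs : twist G (map (fun _ => gone) l) gs = gone.
Proof.
  revert gs; induction l as [|a l IH]; intros [|g gs]; simpl; auto.
  rewrite IH. gsimpl. reflexivity.
Qed.

Lemma twist_repeat_one (ys : list G) : twist G ys (repeat gone (length ys)) = gprod G ys.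
Proof.
  induction ys as [|y ys IH]; simpl; auto.
  rewrite IH. unfold gprod; simpl. gsimpl. reflexivity.
Qed.

End Words.
Section WordLength.
Variables (G : Group) (N : G -> Prop).
Hypothesis HN : normal_subgroup G N.

Definition gen_GN (z : G) : Prop := mixed_comm G N z \/ mixed_comm G N (ginv z).

Lemma cl_le_eq (a b : G) k : a = b -> cl_le G N b k -> cl_le G N a k.
Proof. intros ->; auto. Qed.

Lemma cl_le_one : cl_le G N gone 0.
Proof. exists []. repeat split; constructor. Qed.

Lemma cl_le_gen (c : G) : gen_GN c -> cl_le G N c 1.
Proof.
  intro Hc. exists [c]. split; [reflexivity|]. split; [constructor; auto|].
  apply mulg1.
Qed.

Lemma cl_le_mul (a b : G) i j :
  cl_le G N a i -> cl_le G N b j -> cl_le G N (gmul a b) (i + j).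
Proof.
  intros [l1 [H1 [F1 P1]]] [l2 [H2 [F2 P2]]].
  exists (l1 ++ l2). split; [rewrite length_app; lia|].
  split; [apply Forall_app; auto|].
  rewrite gprod_app, P1, P2. reflexivity.
Qed.

Lemma gen_GN_conj (c z : G) : gen_GN z -> gen_GN (gmul (gmul c z) (ginv c)).
Proof.
  destruct HN as [_ [_ [_ HNconj]]].
  intros [[g [x [Hx ->]]] | [g [x [Hx Hz]]]].
  - left. exists (gmul (gmul c g) (ginv c)), (gmul (gmul c x) (ginv c)).
    split; [auto|]. unfold comm. gsimpl. reflexivity.
  - right. exists (gmul (gmul c g) (ginv c)), (gmul (gmul c x) (ginv c)).
    split; [auto|].
    transitivity (gmul (gmul c (ginv z)) (ginv c)); [gsimpl; reflexivity|].
    rewrite Hz. unfold comm. gsimpl. reflexivity.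
Qed.

Lemma cl_le_conj (c y : G) k :
  cl_le G N y k -> cl_le G N (gmul (gmul c y) (ginv c)) k.
Proof.
  intros [l [Hl [F <-]]].
  exists (map (fun z => gmul (gmul c z) (ginv c)) l).
  split; [rewrite length_map; auto|].
  split; [rewrite Forall_map; eapply Forall_impl; [apply gen_GN_conj | exact F]|].
  clear Hl F. induction l as [|z l IH]; unfold gprod in *; simpl.
  - gsimpl. reflexivity.
  - rewrite IH. gsimpl. reflexivity.
Qed.

(* P c Q = (P c P^-1) (P Q) *)
Lemma cl_le_insert (P Q c : G) k :
  gen_GN c -> cl_le G N (gmul P Q) k -> cl_le G N (gmul P (gmul c Q)) (S k).
Proof.
  intros Hc HPQ.
  apply (cl_le_eq _ (gmul (gmul (gmul P c) (ginv P)) (gmul P Q))); [gsimpl; reflexivity|].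
  apply (cl_le_mul _ _ 1 k); auto.
  apply cl_le_conj, cl_le_gen; auto.
Qed.

(* g' y g'^-1 = [g' g^-1, g y g^-1] (g y g^-1) *)
Lemma cl_le_reconj (P Q g g' y : G) k : N y ->
  cl_le G N (gmul P (gmul (gmul (gmul g y) (ginv g)) Q)) k ->
  cl_le G N (gmul P (gmul (gmul (gmul g' y) (ginv g')) Q)) (S k).
Proof.
  intros Hy H.
  set (Y := gmul (gmul g y) (ginv g)) in H.
  apply (cl_le_eq _ (gmul P (gmul (comm G (gmul g' (ginv g)) Y) (gmul Y Q)))).
  { unfold Y, comm. gsimpl. reflexivity. }
  apply cl_le_insert; auto.
  left. exists (gmul g' (ginv g)), Y. split; [apply HN; auto | reflexivity].
Qed.

Lemma N_gpow (x : G) n : N x -> N (gpow G x n).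
Proof. intro Hx. induction n; simpl; apply HN; auto. Qed.

Lemma cl_le_twist_reconj (ys gs gs' : list G) (P Q : G) k :
  Forall N ys -> length gs = length ys -> length gs' = length ys ->
  cl_le G N (gmul P (gmul (twist G ys gs) Q)) k ->
  cl_le G N (gmul P (gmul (twist G ys gs') Q)) (k + length ys).
Proof.
  revert gs gs' P k.
  induction ys as [|y ys IH]; intros [|g gs] [|g' gs'] P k HF Hl Hl' H;
    simpl in *; try discriminate.
  - rewrite Nat.add_0_r. exact H.
  - inversion HF as [|? ? Hy HF']; subst.
    injection Hl as Hl. injection Hl' as Hl'.
    rewrite <- Nat.add_succ_comm.
    apply (cl_le_eq _ (gmul (gmul P (gmul (gmul g' y) (ginv g'))) (gmul (twist G ys gs') Q)));
      [gsimpl; reflexivity|].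
    apply (IH gs); auto.
    apply (cl_le_eq _ (gmul P (gmul (gmul (gmul g' y) (ginv g')) (gmul (twist G ys gs) Q))));
      [gsimpl; reflexivity|].
    apply (cl_le_reconj _ _ g); auto.
    rewrite <- gmul_assoc in H. exact H.
Qed.

(* Merging the i-th factors of two twisted words costs one generator: the factor
   h (f' x) h^-1 is moved to the left by conjugating the intermediate factors,
   and then re-conjugated by g. *)
Lemma cl_le_twist_merge (f f' : G -> G) (xs gs hs : list G) (P Q : G) k :
  Forall (fun x => N (f x) /\ N (f' x)) xs ->
  length gs = length xs -> length hs = length xs ->
  cl_le G N (gmul P (gmul (twist G (map f xs) gs) (gmul (twist G (map f' xs) hs) Q))) k ->
  exists gs', length gs' = length xs /\
    cl_le G N (gmul P (gmul (twist G (map (fun x => gmul (f x) (f' x)) xs) gs') Q))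
      (k + length xs).
Proof.
  revert gs hs P k.
  induction xs as [|x xs IH]; intros [|g gs] [|h hs] P k HF Hg Hh H;
    simpl in *; try discriminate.
  - exists []. split; [reflexivity|]. rewrite Nat.add_0_r. rewrite gmul_1l in H. exact H.
  - inversion HF as [|? ? [Hx Hx'] HF']; subst.
    injection Hg as Hg. injection Hh as Hh.
    set (Z := gmul (gmul h (f' x)) (ginv h)).
    assert (H1 : cl_le G N (gmul (gmul P (gmul (gmul g (f x)) (ginv g)))
        (gmul (gmul (gmul g (f' x)) (ginv g))
          (gmul (twist G (map f xs) (map (gmul (ginv Z)) gs))
            (gmul (twist G (map f' xs) hs) Q)))) (S k)).
    { apply (cl_le_reconj _ _ h); auto.
      rewrite <- twist_conj. eapply cl_le_eq; [|exact H].
      unfold Z. gsimpl. reflexivity. }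
    destruct (IH (map (gmul (ginv Z)) gs) hs
                 (gmul P (gmul (gmul g (gmul (f x) (f' x))) (ginv g))) (S k))
      as [gs' [Hl H2]]; auto.
    { rewrite length_map; auto. }
    { eapply cl_le_eq; [|exact H1]. gsimpl. reflexivity. }
    exists (g :: gs'). split; [simpl; auto|].
    rewrite <- Nat.add_succ_comm. eapply cl_le_eq; [|exact H2]. gsimpl. reflexivity.
Qed.

Lemma cl_le_twisted_mul (f f' : G -> G) (x : G) (xs gs hs : list G) A B :
  Forall (fun x => N (f x) /\ N (f' x)) xs ->
  length gs = length xs -> length hs = length xs ->
  cl_le G N (twisted_prod G (map f (x :: xs)) gs) A ->
  cl_le G N (twisted_prod G (map f' (x :: xs)) hs) B ->
  exists gs', length gs' = length xs /\
    cl_le G N (twisted_prod G (map (fun x => gmul (f x) (f' x)) (x :: xs)) gs')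
      (A + B + length xs).
Proof.
  intros HF Hg Hh HA HB. simpl in *.
  destruct (cl_le_twist_merge f f' xs (map (gmul (ginv (f' x))) gs) hs
              (gmul (f x) (f' x)) gone (A + B)) as [gs' [Hl H]]; auto.
  - rewrite length_map; auto.
  - rewrite <- twist_conj. eapply cl_le_eq; [|exact (cl_le_mul _ _ _ _ HA HB)].
    gsimpl. reflexivity.
  - exists gs'. split; auto. eapply cl_le_eq; [|exact H]. gsimpl. reflexivity.
Qed.

End WordLength.

Lemma nat_inf_spec (P : nat -> Prop) :
  (exists n, P n) -> P (nat_inf P) /\ forall k, P k -> nat_inf P <= k.
Proof.
  intro Hex. unfold nat_inf. apply epsilon_spec.
  destruct Hex as [n Hn]. revert Hn.
  induction n as [n IH] using (well_founded_induction Nat.lt_wf_0). intro Hn.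
  destruct (classic (exists k, k < n /\ P k)) as [[k [Hk Pk]] | Hmin].
  - exact (IH k Hk Pk).
  - exists n. split; auto. intros k Pk.
    apply Nat.nlt_ge. intro Hk. apply Hmin. eauto.
Qed.

Section ConjugacyLength.
Variables (G : Group) (N : G -> Prop).
Hypothesis HN : normal_subgroup G N.

Lemma cl_spec (y : G) k :
  cl_le G N y k -> cl_le G N y (cl G N y) /\ cl G N y <= k.
Proof.
  intro Hk. destruct (nat_inf_spec (cl_le G N y)) as [Hcl Hmin]; eauto.
Qed.

Lemma cl_sum_spec (y : G) (ys : list G) :
  (exists gs, length gs = length ys /\
     cl_sum G N (y :: ys) = cl G N (twisted_prod G (y :: ys) gs)) /\
  forall gs, length gs = length ys ->
     cl_sum G N (y :: ys) <= cl G N (twisted_prod G (y :: ys) gs).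
Proof.
  unfold cl_sum. simpl pred.
  destruct (nat_inf_spec (fun k => exists gs : list G, length gs = length ys /\
     k = cl G N (twisted_prod G (y :: ys) gs))) as [Hatt Hmin].
  - exists (cl G N (twisted_prod G (y :: ys) (repeat gone (length ys)))).
    exists (repeat gone (length ys)). split; auto using repeat_length.
  - split; auto. intros gs Hgs. apply Hmin. eauto.
Qed.

Definition gpows (xs : list G) (n : nat) : list G := map (fun x => gpow G x n) xs.

Variables (x1 : G) (xr : list G).
Hypothesis HxN : Forall N (x1 :: xr).
Hypothesis Hprod : in_GN G N (gprod G (x1 :: xr)).

Lemma cl_le_twisted_gpows_add n k gs hs A B :
  length gs = length xr -> length hs = length xr ->
  cl_le G N (twisted_prod G (gpows (x1 :: xr) n) gs) A ->
  cl_le G N (twisted_prod G (gpows (x1 :: xr) k) hs) B ->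
  exists gs', length gs' = length xr /\
    cl_le G N (twisted_prod G (gpows (x1 :: xr) (n + k)) gs') (A + B + length xr).
Proof.
  intros Hg Hh HA HB.
  assert (HF : Forall (fun x => N (gpow G x n) /\ N (gpow G x k)) xr).
  { inversion HxN; subst. eapply Forall_impl; [|eassumption].
    intros x Hx. split; apply N_gpow; auto. }
  destruct (cl_le_twisted_mul G N HN _ _ x1 xr gs hs A B HF Hg Hh HA HB) as [gs' [Hl H]].
  exists gs'. split; auto. eapply cl_le_eq; [|exact H].
  unfold gpows. f_equal. apply map_ext. intro. apply gpow_add.
Qed.

(* Power n+1 is merged from powers n and 1, the latter being gprod with trivial
   conjugators; the conjugators are then changed at will. *)
Lemma in_GN_twisted_gpows n gs :
  length gs = length xr -> in_GN G N (twisted_prod G (gpows (x1 :: xr) n) gs).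
Proof.
  inversion HxN as [|? ? _ HxrN]; subst.
  revert gs. induction n as [|n IH]; intros gs Hgs.
  - exists 0. unfold gpows, twisted_prod. simpl.
    rewrite (twist_map_one G xr gs), gmul_1l. apply cl_le_one.
  - set (ones := repeat (@gone G) (length xr)).
    assert (Hones : length ones = length xr) by apply repeat_length.
    destruct (IH ones Hones) as [A HA].
    destruct Hprod as [B HB].
    assert (HB1 : cl_le G N (twisted_prod G (gpows (x1 :: xr) 1) ones) B).
    { eapply cl_le_eq; [|exact HB]. unfold gpows.
      rewrite (map_ext _ (fun x => x)), map_id by (intro; apply gpow1).
      unfold ones. simpl twisted_prod. rewrite twist_repeat_one. reflexivity. }
    destruct (cl_le_twisted_gpows_add n 1 ones ones A B Hones Hones HA HB1)
      as [gs' [Hl HAB]].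
    rewrite Nat.add_1_r in HAB.
    exists (A + B + length xr + length (gpows xr (S n))).
    cbn [gpows map twisted_prod] in HAB |- *.
    rewrite <- (mulg1 G (twist _ _ gs')) in HAB. rewrite <- (mulg1 G (twist _ _ gs)).
    apply (cl_le_twist_reconj G N HN _ gs'); auto.
    + apply Forall_map. eapply Forall_impl; [|exact HxrN]. intros. apply N_gpow; auto.
    + rewrite length_map; auto.
    + rewrite length_map; auto.
Qed.

Lemma cl_sum_gpows_subadditive n k :
  cl_sum G N (gpows (x1 :: xr) (n + k)) + length xr <=
  (cl_sum G N (gpows (x1 :: xr) n) + length xr) +
  (cl_sum G N (gpows (x1 :: xr) k) + length xr).
Proof.
  assert (Hlen : forall m, length (gpows xr m) = length xr) by (intro; apply length_map).
  assert (Hattained : forall m, exists gs, length gs = length xr /\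
    cl_le G N (twisted_prod G (gpows (x1 :: xr) m) gs) (cl_sum G N (gpows (x1 :: xr) m))).
  { intro m. change (gpows (x1 :: xr) m) with (gpow G x1 m :: gpows xr m).
    destruct (cl_sum_spec (gpow G x1 m) (gpows xr m)) as [[gs [Hl ->]] _].
    rewrite Hlen in Hl. exists gs. split; auto.
    destruct (in_GN_twisted_gpows m gs Hl) as [j Hj]. apply (cl_spec _ _ Hj). }
  destruct (Hattained n) as [gs [Hg HA]]. destruct (Hattained k) as [hs [Hh HB]].
  destruct (cl_le_twisted_gpows_add n k gs hs _ _ Hg Hh HA HB) as [gs' [Hl HAB]].
  destruct (cl_sum_spec (gpow G x1 (n + k)) (gpows xr (n + k))) as [_ Hmin].
  rewrite Hlen in Hmin. specialize (Hmin gs' Hl).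
  destruct (cl_spec _ _ HAB) as [_ Hcl].
  change (gpow G x1 (n + k) :: gpows xr (n + k)) with (gpows (x1 :: xr) (n + k)) in Hmin.
  lia.
Qed.

End ConjugacyLength.

Section Fekete.
Variable a : nat -> nat.
Hypothesis Ha : forall n k, a (n + k) <= a n + a k.

Lemma subadditive_mul_add_le p q r : a (q * p + r) <= q * a p + a r.
Proof.
  induction q as [|q IH]; simpl; [lia|].
  rewrite <- Nat.add_assoc. specialize (Ha p (q * p + r)). lia.
Qed.

Lemma subadditive_le_linear r : a r <= a 0 + r * a 1.
Proof.
  induction r as [|r IH]; [lia|].
  rewrite <- Nat.add_1_r. specialize (Ha r 1). lia.
Qed.

Lemma subadditive_ratio_le p n : (1 <= p)%nat -> (1 <= n)%nat ->
  (INR (a n) / INR n <= INR (a p) / INR p + INR (a 0 + p * a 1) / INR n)%R.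
Proof.
  intros Hp Hn.
  set (q := (n / p)%nat). set (r := (n mod p)%nat).
  assert (Hdm : n = (q * p + r)%nat).
  { unfold q, r. rewrite Nat.mul_comm. apply Nat.div_mod. lia. }
  assert (Hr : (r < p)%nat) by (apply Nat.mod_upper_bound; lia).
  assert (Hnat : (a n <= q * a p + (a 0 + p * a 1))%nat).
  { rewrite Hdm. pose proof (subadditive_mul_add_le p q r).
    pose proof (subadditive_le_linear r).
    assert (r * a 1 <= p * a 1)%nat by (apply Nat.mul_le_mono_r; lia). lia. }
  assert (Hqp : (q * p <= n)%nat) by lia.
  apply le_INR in Hnat, Hqp. rewrite plus_INR, mult_INR in Hnat. rewrite mult_INR in Hqp.
  set (M := INR (a 0 + p * a 1)) in *.
  assert (Hp0 : (0 < INR p)%R) by (apply lt_0_INR; lia).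
  assert (Hn0 : (0 < INR n)%R) by (apply lt_0_INR; lia).
  assert (Hap := pos_INR (a p)).
  assert (Hqap : (INR q * INR (a p) <= INR n * (INR (a p) / INR p))%R).
  { apply (Rmult_le_reg_r (INR p)); auto.
    replace (INR n * (INR (a p) / INR p) * INR p)%R with (INR n * INR (a p))%R
      by (field; lra).
    nra. }
  apply (Rmult_le_reg_r (INR n)); auto.
  replace ((INR (a p) / INR p + M / INR n) * INR n)%R
    with (INR n * (INR (a p) / INR p) + M)%R by (field; lra).
  replace (INR (a n) / INR n * INR n)%R with (INR (a n)) by (field; lra).
  lra.
Qed.

End Fekete.

Lemma seq_inf_exists (u : nat -> R) (b : R) : (forall n, (b <= u n)%R) ->
  exists l, (forall n, (l <= u n)%R) /\
            forall e, (0 < e)%R -> exists p, (u p < l + e)%R.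
Proof.
  intro Hb.
  set (E := fun x : R => exists n, x = (- u n)%R).
  destruct (completeness E) as [m [Hub Hlub]].
  - exists (- b)%R. intros x [n ->]. specialize (Hb n). lra.
  - exists (- u 0%nat)%R, 0%nat. reflexivity.
  - exists (- m)%R. split.
    + intro n. specialize (Hub _ (ex_intro _ n eq_refl)). lra.
    + intros e He. apply NNPP. intro Hno.
      assert (m <= m - e)%R; [|lra].
      apply Hlub. intros x [n ->].
      destruct (Rlt_or_le (u n) (- m + e)) as [Hlt | Hge]; [exfalso; eauto | lra].
Qed.

Lemma Un_cv_const_div_INR (C : R) : Un_cv (fun n => C / INR n)%R 0%R.
Proof.
  intros eps Heps.
  assert (HC := Rabs_pos C).
  destruct (archimed_cor1 (eps / (Rabs C + 1)))%R as [N [HN1 HN2]].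
  { apply Rdiv_lt_0_compat; lra. }
  exists N. intros n Hn. unfold R_dist. rewrite Rminus_0_r.
  assert (HNn : (INR N <= INR n)%R) by (apply le_INR; lia).
  assert (Hn0 : (0 < INR n)%R) by (apply lt_0_INR; lia).
  unfold Rdiv. rewrite Rabs_mult, Rabs_inv, (Rabs_right (INR n)) by lra.
  assert (Hinv : (/ INR n <= / INR N)%R) by (apply Rinv_le_contravar; auto; apply lt_0_INR; lia).
  assert (eps / (Rabs C + 1) * (Rabs C + 1) = eps)%R by (field; lra).
  assert (0 < / INR n)%R by (apply Rinv_0_lt_compat; auto).
  nra.
Qed.

Theorem fekete (a : nat -> nat) (Ha : forall n k, a (n + k) <= a n + a k) :
  exists l, Un_cv (fun n => INR (a n) / INR n)%R l.
Proof.
  destruct (seq_inf_exists (fun n => INR (a (S n)) / INR (S n))%R 0%R) as [l [Hlow Happrox]].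
  { intro n. apply Rle_mult_inv_pos; [apply pos_INR | apply lt_0_INR; lia]. }
  exists l. intros eps Heps.
  destruct (Happrox (eps / 2)%R) as [p Hp]; [lra|].
  destruct (Un_cv_const_div_INR (INR (a 0 + S p * a 1)) (eps / 2)%R) as [N HN]; [lra|].
  exists (max N 1). intros n Hn.
  specialize (HN n ltac:(lia)). unfold R_dist in HN |- *.
  rewrite Rminus_0_r, Rabs_right in HN
    by (apply Rle_ge, Rle_mult_inv_pos; [apply pos_INR | apply lt_0_INR; lia]).
  assert (Hup := subadditive_ratio_le a Ha (S p) n ltac:(lia) ltac:(lia)).
  specialize (Hlow (pred n)). replace (S (pred n)) with n in Hlow by lia.
  rewrite Rabs_right; lra.
Qed.

Lemma Un_cv_INR_add_div (b : nat -> nat) (c : nat) (l : R) :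
  Un_cv (fun n => INR (b n + c) / INR n)%R l -> Un_cv (fun n => INR (b n) / INR n)%R l.
Proof.
  intro Hcv. rewrite <- (Rminus_0_r l).
  apply (Un_cv_ext (fun n => INR (b n + c) / INR n - INR c / INR n)%R).
  - intro n. rewrite plus_INR. unfold Rdiv. ring.
  - apply CV_minus; auto. apply Un_cv_const_div_INR.
Qed.

Theorem lemma5p11 (G : Group) (N : G -> Prop) (HN : normal_subgroup G N)
  (xs : list G) (Hm : xs <> nil) (HxN : Forall N xs)
  (Hprod : in_GN G N (gprod G xs)) :
  let a := fun n : nat =>
    (cl_sum G N (map (fun x => gpow G x n) xs) + (length xs - 1))%nat in
  (forall n k : nat, (a (n + k) <= a n + a k)%nat) /\
  exists l : R,
    Un_cv (fun n : nat => INR (cl_sum G N (map (fun x => gpow G x n) xs)) / INR n)%R l.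
Proof.
  intro a. destruct xs as [|x1 xr]; [contradiction|].
  assert (Hsub : forall n k, a (n + k) <= a n + a k).
  { intros n k. unfold a. replace (length (x1 :: xr) - 1) with (length xr) by (simpl; lia).
    exact (cl_sum_gpows_subadditive G N HN x1 xr HxN Hprod n k). }
  split; [exact Hsub|].
  destruct (fekete a Hsub) as [l Hl].
  exists l. exact (Un_cv_INR_add_div _ _ l Hl).
Qed.
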